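(* Let $\theta\mapsto\mathcal E_\theta$ be a differentiable family of unital quantum channels on $d\times d$ matrices with Kraus operators $\{K_i^\theta\}$ and Liouville representation $T_\theta=\sum_iK_i^\theta\otimes K_i^{\theta*}$, and let $\theta_0$ be a parameter value. Denote by $P$ the projection onto the subspace $\mathcal P$ spanned by the eigenvectors of $T_\theta^\dagger T_\theta$ with eigenvalue $1$. Suppose that at $\theta=\theta_0$: (i) $PT_\theta^\dagger\dot T_\theta P\neq0$ and $PT_\theta^\dagger\dot T_\theta P$ is a normal operator; and (ii) there exist a unitary $U_c$ and a matrix $R_0$ with $|R_0\rangle\rangle$ an eigenvector of $PT_\theta^\dagger\dot T_\theta P$ associated with a nonzero eigenvalue, such that $$U_c^\dagger R_0U_c=\sum_kK_k^{\theta_0}R_0K_k^{\theta_0\dagger}.$$ Then the sequential QFI of $N$ channels can achieve the Heisenberg limit by applying the same unitary control $U_c$ after each channel: there exists an input state $\rho_0$ (independent of $N$) such that, with $\rho_\theta^{(N)}=(\mathcal U_c\circ\mathcal E_\theta)^N(\rho_0)$ where $\mathcal U_c(\rho)=U_c\rho U_c^\dagger$, one has $\liminf_{N\to\infty}F^Q(\rho_\theta^{(N)})|_{\theta=\theta_0}/N^2>0$.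
   Context: Unital means $\mathcal E_\theta(I)=I$ (channels are trace preserving). For a $d\times d$ matrix $A$, $|A\rangle\rangle=(A_{11},A_{12},\dots,A_{dd})^T$ is its vectorization and $\langle\langle A|B\rangle\rangle=\operatorname{Tr}(A^\dagger B)$; then $T_\theta|\rho\rangle\rangle=|\mathcal E_\theta(\rho)\rangle\rangle$, and the controlled channel $\mathcal U_c\circ\mathcal E_\theta$ has Liouville representation $(U_c\otimes U_c^* )T_\theta$. $T_\theta^\dagger$ is the conjugate transpose of the $d^2\times d^2$ matrix $T_\theta$, and $\dot T_\theta=dT_\theta/d\theta$; $P$ and $PT_\theta^\dagger\dot T_\theta P$ are evaluated at $\theta=\theta_0$. $F^Q(\rho_\theta)=\operatorname{Tr}(\rho_\theta L_{\rho_\theta}^2)$ is the quantum Fisher information with symmetric logarithmic derivative defined by $2\dot\rho_\theta=\rho_\theta L_{\rho_\theta}+L_{\rho_\theta}\rho_\theta$. No ancilla is used. *)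

From HB Require Import structures.
From mathcomp Require Import all_boot all_order all_algebra.
From mathcomp Require Import all_classical all_reals.
From mathcomp Require Import topology normedtype derive.
From mathcomp Require Import complex mxtens.

Set Implicit Arguments.
Unset Strict Implicit.
Unset Printing Implicit Defensive.

Import Order.TTheory GRing.Theory Num.Theory.
Import numFieldNormedType.Exports.
Local Open Scope ring_scope.

Definition adj (R : rcfType) (m n : nat) (A : 'M[R[i]]_(m, n)) : 'M[R[i]]_(n, m) :=
  (map_mx (@conjc R) A)^T.

(* row-major vectorization |A>> = (A_11, A_12, ..., A_dd)^T, with the index
   convention of the Kronecker product [tensmx] (index (i,j) |-> i*d + j) *)
Definition vecm (R : rcfType) (d : nat) (A : 'M[R[i]]_d) : 'cV[R[i]]_(d * d) :=
  \col_k A (mxtens_unindex k).1 (mxtens_unindex k).2.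

Definition channel (R : rcfType) (d r : nat) (K : 'I_r -> 'M[R[i]]_d)
  (rho : 'M[R[i]]_d) : 'M[R[i]]_d :=
  \sum_(i < r) (K i *m rho *m adj (K i)).

Definition liouville (R : rcfType) (d r : nat) (K : 'I_r -> 'M[R[i]]_d)
  : 'M[R[i]]_(d * d) :=
  \sum_(i < r) (K i *t map_mx (@conjc R) (K i)).

Definition unitary (R : rcfType) (d : nat) (U : 'M[R[i]]_d) : Prop :=
  adj U *m U = 1%:M /\ U *m adj U = 1%:M.

Definition density (R : rcfType) (d : nat) (rho : 'M[R[i]]_d) : Prop :=
  (forall v : 'cV[R[i]]_d, 0 <= (adj v *m rho *m v) 0 0) /\ \tr rho = 1.

Definition mx_derivable (R : realType) (m n : nat) (F : R -> 'M[R[i]]_(m, n))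
  (t : R) : Prop :=
  forall i j, derivable (fun s : R => complex.Re (F s i j)) t 1 /\
              derivable (fun s : R => complex.Im (F s i j)) t 1.

Definition mderive (R : realType) (m n : nat) (F : R -> 'M[R[i]]_(m, n))
  (t : R) : 'M[R[i]]_(m, n) :=
  \matrix_(i, j) Complex (derive1 (fun s : R => complex.Re (F s i j)) t)
                         (derive1 (fun s : R => complex.Im (F s i j)) t).

Definition is_SLD (R : rcfType) (d : nat) (rho drho L : 'M[R[i]]_d) : Prop :=
  adj L = L /\ 2%:R *: drho = rho *m L + L *m rho.

(* quantum Fisher information Tr(rho L^2); this value does not depend on the
   choice of the SLD L (and an SLD exists for differentiable families of states) *)
Definition QFI (R : realType) (d : nat) (rho drho : 'M[R[i]]_d) : R :=
  xget 0 [set q : R | exists L, is_SLD rho drho L /\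
                        Complex q 0 = \tr (rho *m L *m L)].

Definition seq_state (R : realType) (d r : nat) (K : R -> 'I_r -> 'M[R[i]]_d)
  (Uc rho0 : 'M[R[i]]_d) (N : nat) (theta : R) : 'M[R[i]]_d :=
  iter N (fun rho => Uc *m channel (K theta) rho *m adj Uc) rho0.

(* Let [H] be a Hermitian combination of [R0] and [R0^+] and put
   [rho0 = (1 + eps H) / tr(1 + eps H)] with [eps] small enough for [rho0 > 0].  Both
   [1] and [R0] are fixed by [U_c o E_theta0] and have [|.>>] in the eigenvalue-1
   eigenspace of [T^+ T], hence so does [rho0]: the sequential state stays [rho0] at
   [theta0] for every [N].  Differentiating [|rho_(N+1)>> = V T |rho_N>>] (with
   [V = U_c (x) U_c^*]) gives [|rho_(N+1)'>> = V (T' |rho0>> + T |rho_N'>>)], and against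
   a Hermitian steady [X] (for which [<<X| V T = <<X|]) the first-order terms add up:
   [Tr (X rho_N') = N <<X| V T' |rho0>> = N eps/tr <<X| P T^+ T' P |H>>], using
   [T' |1>> = 0] (unitality).  Because [<<R0| P T^+ T' P |R0>> = lam |R0|^2 <> 0], some
   Hermitian pair [X, H] makes this nonzero, and the Cauchy-Schwarz bound
   [|Tr (X rho')|^2 <= Tr (rho X^2) F_Q] yields [F_Q >= c N^2]. *)

From HB Require Import structures.
From mathcomp Require Import all_boot all_order all_algebra.
From mathcomp Require Import all_classical all_reals.
From mathcomp Require Import topology normedtype derive.
From mathcomp Require Import complex mxtens.
From mathcomp Require Import ring.

Set Implicit Arguments.
Unset Strict Implicit.
Unset Printing Implicit Defensive.

Import Order.TTheory GRing.Theory Num.Theory.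
Import numFieldNormedType.Exports.
Local Open Scope ring_scope.

Section ComplexDerivative.
Variable R : realType.
Implicit Types (f g : R -> R[i]) (t : R) (a b : R[i]).

Lemma ReD a b : complex.Re (a + b) = complex.Re a + complex.Re b.
Proof. by case: a; case: b. Qed.

Lemma ImD a b : complex.Im (a + b) = complex.Im a + complex.Im b.
Proof. by case: a; case: b. Qed.

Lemma ReM a b :
  complex.Re (a * b) = complex.Re a * complex.Re b - complex.Im a * complex.Im b.
Proof. by case: a; case: b. Qed.

Lemma ImM a b :
  complex.Im (a * b) = complex.Re a * complex.Im b + complex.Im a * complex.Re b.
Proof. by case: a; case: b. Qed.

Lemma ReJ a : complex.Re (conjc a) = complex.Re a.
Proof. by case: a. Qed.

Lemma ImJ a : complex.Im (conjc a) = - complex.Im a.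
Proof. by case: a. Qed.

Definition is_cderive f t df :=
  is_derive t 1 (fun s => complex.Re (f s)) (complex.Re df) /\
  is_derive t 1 (fun s => complex.Im (f s)) (complex.Im df).

Lemma is_cderive_cst t a : is_cderive (fun _ => a) t 0.
Proof. by split; apply: is_derive_cst. Qed.

Lemma is_cderiveD f g t a b : is_cderive f t a -> is_cderive g t b ->
  is_cderive (fun s => f s + g s) t (a + b).
Proof.
move=> [fr fi] [gr gi]; split.
  by rewrite ReD; under eq_fun do rewrite ReD; exact: is_deriveD.
by rewrite ImD; under eq_fun do rewrite ImD; exact: is_deriveD.
Qed.

Lemma is_cderiveM f g t a b : is_cderive f t a -> is_cderive g t b ->
  is_cderive (fun s => f s * g s) t (a * g t + f t * b).
Proof.
move=> [fr fi] [gr gi]; split.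
  have -> : complex.Re (a * g t + f t * b) =
      (complex.Re (f t) *: complex.Re b + complex.Re (g t) *: complex.Re a)
    - (complex.Im (f t) *: complex.Im b + complex.Im (g t) *: complex.Im a).
    by rewrite ReD !ReM /GRing.scale /=; ring.
  by under eq_fun do rewrite ReM; exact: is_deriveB (is_deriveM fr gr) (is_deriveM fi gi).
have -> : complex.Im (a * g t + f t * b) =
    (complex.Re (f t) *: complex.Im b + complex.Im (g t) *: complex.Re a)
  + (complex.Im (f t) *: complex.Re b + complex.Re (g t) *: complex.Im a).
  by rewrite ImD !ImM /GRing.scale /=; ring.
by under eq_fun do rewrite ImM; exact: is_deriveD (is_deriveM fr gi) (is_deriveM fi gr).
Qed.

Lemma is_cderiveJ f t a : is_cderive f t a -> is_cderive (fun s => conjc (f s)) t (conjc a).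
Proof.
move=> [fr fi]; split; first by rewrite ReJ; under eq_fun do rewrite ReJ.
by rewrite ImJ; under eq_fun do rewrite ImJ; exact: is_deriveN.
Qed.

Lemma is_cderive_sum n (F : 'I_n -> R -> R[i]) t (dF : 'I_n -> R[i]) :
  (forall k, is_cderive (F k) t (dF k)) ->
  is_cderive (fun s => \sum_(k < n) F k s) t (\sum_(k < n) dF k).
Proof.
elim: n F dF => [|n IHn] F dF dFP.
  by rewrite big_ord0; under eq_fun do rewrite big_ord0; exact: is_cderive_cst.
rewrite big_ord_recr; under eq_fun do rewrite big_ord_recr.
by apply: is_cderiveD => //; apply: IHn.
Qed.

Lemma is_cderive_unique f t a b : is_cderive f t a -> is_cderive f t b -> a = b.
Proof.
move=> [[_ ar] [_ ai]] [[_ br] [_ bi]].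
by case: a ar ai => ? ? /= <- <-; case: b br bi => ? ? /= <- <-.
Qed.

Definition is_mxderive m n (F : R -> 'M[R[i]]_(m, n)) t (dF : 'M[R[i]]_(m, n)) :=
  forall i j, is_cderive (fun s => F s i j) t (dF i j).

Lemma mderive_val m n (F : R -> 'M[R[i]]_(m, n)) t dF :
  is_mxderive F t dF -> mderive F t = dF.
Proof.
move=> dFP; apply/matrixP => i j; rewrite mxE !derive1E.
have [[_ ->] [_ ->]] := dFP i j.
by case: (dF i j).
Qed.

Lemma mx_derivableP m n (F : R -> 'M[R[i]]_(m, n)) t :
  mx_derivable F t -> is_mxderive F t (mderive F t).
Proof.
move=> dF i j; have [dRe dIm] := dF i j.
by rewrite mxE; split; rewrite /= derive1E; exact: derivableP.
Qed.

Lemma is_mxderive_unique m n (F : R -> 'M[R[i]]_(m, n)) t A B :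
  is_mxderive F t A -> is_mxderive F t B -> A = B.
Proof. by move=> dA dB; apply/matrixP => i j; exact: is_cderive_unique (dA i j) (dB i j). Qed.

Lemma is_mxderive_cst m n t (A : 'M[R[i]]_(m, n)) : is_mxderive (fun _ => A) t 0.
Proof. by move=> i j; rewrite mxE; exact: is_cderive_cst. Qed.

Lemma is_mxderive_sum m n r (F : 'I_r -> R -> 'M[R[i]]_(m, n)) t
    (dF : 'I_r -> 'M[R[i]]_(m, n)) :
  (forall k, is_mxderive (F k) t (dF k)) ->
  is_mxderive (fun s => \sum_(k < r) F k s) t (\sum_(k < r) dF k).
Proof.
move=> dFP i j; rewrite summxE; under eq_fun do rewrite summxE.
by apply: is_cderive_sum => k; exact: dFP.
Qed.

Lemma is_mxderiveM m n p (F : R -> 'M[R[i]]_(m, n)) (G : R -> 'M[R[i]]_(n, p)) t A B :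
  is_mxderive F t A -> is_mxderive G t B ->
  is_mxderive (fun s => F s *m G s) t (A *m G t + F t *m B).
Proof.
move=> dF dG i j; rewrite !mxE -big_split /=; under eq_fun do rewrite mxE.
by apply: is_cderive_sum => k; exact: is_cderiveM.
Qed.

Lemma is_mxderive_conj m n (F : R -> 'M[R[i]]_(m, n)) t A :
  is_mxderive F t A ->
  is_mxderive (fun s => map_mx (@conjc R) (F s)) t (map_mx (@conjc R) A).
Proof. by move=> dF i j; rewrite mxE; under eq_fun do rewrite mxE; exact: is_cderiveJ. Qed.

Lemma is_mxderive_adj m n (F : R -> 'M[R[i]]_(m, n)) t A :
  is_mxderive F t A -> is_mxderive (fun s => adj (F s)) t (adj A).
Proof. by move=> dF i j; rewrite !mxE; under eq_fun do rewrite !mxE; exact: is_cderiveJ. Qed.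

Lemma is_mxderive_tens m n p q (F : R -> 'M[R[i]]_(m, n)) (G : R -> 'M[R[i]]_(p, q))
    t A B :
  is_mxderive F t A -> is_mxderive G t B ->
  is_mxderive (fun s => F s *t G s) t (A *t G t + F t *t B).
Proof.
by move=> dF dG i j; rewrite !mxE; under eq_fun do rewrite mxE; exact: is_cderiveM.
Qed.

Lemma is_mxderive_vecm d (F : R -> 'M[R[i]]_d) t A :
  is_mxderive F t A -> is_mxderive (fun s => vecm (F s)) t (vecm A).
Proof. by move=> dF i j; rewrite mxE; under eq_fun do rewrite mxE; exact: dF. Qed.

End ComplexDerivative.

Section ComplexMatrix.
Variable R : rcfType.
Local Notation C := R[i].

Lemma mxentryZ m n a (A : 'M[C]_(m, n)) i j : (a *: A) i j = a * A i j.
Proof. by rewrite mxE. Qed.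

Lemma mx11_eq0 (A : 'M[C]_1) : (A == 0) = (A 0 0 == 0).
Proof.
apply/eqP/eqP => [->|A0]; first by rewrite mxE.
by rewrite [A]mx11_scalar A0; apply/matrixP => i j; rewrite !mxE mul0rn.
Qed.

Lemma adjE m n (A : 'M[C]_(m, n)) i j : adj A i j = (A j i)^*.
Proof. by rewrite !mxE. Qed.

Lemma adjM m n p (A : 'M[C]_(m, n)) (B : 'M[C]_(n, p)) : adj (A *m B) = adj B *m adj A.
Proof. by rewrite /adj map_mxM trmx_mul. Qed.

Lemma adjK m n (A : 'M[C]_(m, n)) : adj (adj A) = A.
Proof. by apply/matrixP => i j; rewrite !mxE conjcK. Qed.

Lemma adjD m n (A B : 'M[C]_(m, n)) : adj (A + B) = adj A + adj B.
Proof. by apply/matrixP => i j; rewrite !mxE rmorphD. Qed.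

Lemma adjB m n (A B : 'M[C]_(m, n)) : adj (A - B) = adj A - adj B.
Proof. by apply/matrixP => i j; rewrite !mxE rmorphB. Qed.

Lemma adjZ m n (a : C) (A : 'M[C]_(m, n)) : adj (a *: A) = a^* *: adj A.
Proof. by apply/matrixP => i j; rewrite !mxE rmorphM. Qed.

Lemma adj_sum m n r (A : 'I_r -> 'M[C]_(m, n)) :
  adj (\sum_(k < r) A k) = \sum_(k < r) adj (A k).
Proof.
apply/matrixP => i j; rewrite !mxE !summxE rmorph_sum.
by apply: eq_bigr => k _; rewrite !mxE.
Qed.

Lemma adj0 m n : adj (0 : 'M[C]_(m, n)) = 0.
Proof. by apply/matrixP => i j; rewrite !mxE rmorph0. Qed.

Lemma adj1 n : adj (1%:M : 'M[C]_n) = 1%:M.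
Proof. by apply/matrixP => i j; rewrite !mxE rmorph_nat eq_sym. Qed.

Lemma adj_tens m n p q (A : 'M[C]_(m, n)) (B : 'M[C]_(p, q)) :
  adj (A *t B) = adj A *t adj B.
Proof. by apply/matrixP => i j; rewrite !mxE rmorphM. Qed.

Lemma trmx_adj m n (A : 'M[C]_(m, n)) : (adj A)^T = map_mx (@conjc R) A.
Proof. exact: trmxK. Qed.

Lemma adj_conj m n (A : 'M[C]_(m, n)) : adj (map_mx (@conjc R) A) = A^T.
Proof. by apply/matrixP => i j; rewrite !mxE conjcK. Qed.

Lemma conj_mxtrace n (A : 'M[C]_n) : (\tr A)^* = \tr (adj A).
Proof. by rewrite /mxtrace rmorph_sum; apply: eq_bigr => i _; rewrite !mxE. Qed.

Lemma conj_adj_mx00 (A : 'M[C]_1) : (A 0 0)^* = adj A 0 0.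
Proof. by rewrite !mxE. Qed.

End ComplexMatrix.

Section Vectorization.
Variable R : rcfType.
Local Notation C := R[i].

Fact vecm_is_linear d : linear (@vecm R d).
Proof. by move=> a A B; apply/matrixP => i j; rewrite !mxE. Qed.

HB.instance Definition _ d :=
  GRing.isLinear.Build C 'M[C]_d 'cV[C]_(d * d) *:%R (@vecm R d) (@vecm_is_linear d).

Lemma vecmD d (A B : 'M[C]_d) : vecm (A + B) = vecm A + vecm B.
Proof. exact: linearD. Qed.

Lemma vecmB d (A B : 'M[C]_d) : vecm (A - B) = vecm A - vecm B.
Proof. exact: linearB. Qed.

Lemma vecmZ d a (A : 'M[C]_d) : vecm (a *: A) = a *: vecm A.
Proof. exact: linearZ. Qed.

Lemma vecm_inj d : injective (@vecm R d).
Proof.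
move=> A B /matrixP eqAB; apply/matrixP => i j.
by have := eqAB (mxtens_index (i, j)) 0; rewrite !mxE mxtens_indexK.
Qed.

Lemma big_mxtens_index (V : nmodType) m n (F : 'I_(m * n) -> V) :
  \sum_(l < m * n) F l = \sum_(p < m) \sum_(q < n) F (mxtens_index (p, q)).
Proof.
rewrite pair_big /=; apply: reindex => /=.
by exists (@mxtens_unindex m n) => l _; rewrite (mxtens_indexK, mxtens_unindexK) //; case: l.
Qed.

Lemma vecm_mul d (A X B : 'M[C]_d) : vecm (A *m X *m B) = (A *t B^T) *m vecm X.
Proof.
apply/matrixP => k z; case: (mxtens_indexP k) => i j.
rewrite !mxE mxtens_indexK /= big_mxtens_index.
under eq_bigr do rewrite mxE mulr_suml.
rewrite exchange_big /=; apply: eq_bigr => p _; apply: eq_bigr => q _.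
by rewrite tensmxE !mxE !mxtens_indexK /= mulrAC.
Qed.

Definition sandwich_liouville d (U : 'M[C]_d) : 'M[C]_(d * d) := U *t map_mx (@conjc R) U.

Lemma sandwich_liouville_vecm d (U X : 'M[C]_d) :
  sandwich_liouville U *m vecm X = vecm (U *m X *m adj U).
Proof. by rewrite vecm_mul trmx_adj. Qed.

Lemma adj_sandwich_liouville_vecm d (U X : 'M[C]_d) :
  adj (sandwich_liouville U) *m vecm X = vecm (adj U *m X *m U).
Proof. by rewrite vecm_mul adj_tens adj_conj. Qed.

Lemma adj_vecm_mul d (A B : 'M[C]_d) : (adj (vecm A) *m vecm B) 0 0 = \tr (adj A *m B).
Proof.
rewrite mxE big_mxtens_index /mxtrace exchange_big /=; apply: eq_bigr => p _.
by rewrite mxE; apply: eq_bigr => q _; rewrite !mxE mxtens_indexK.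
Qed.

End Vectorization.

Section Channel.
Variables (R : rcfType) (d r : nat) (K : 'I_r -> 'M[R[i]]_d).
Local Notation C := R[i].

Definition dual_channel (X : 'M[C]_d) : 'M[C]_d := \sum_(k < r) (adj (K k) *m X *m K k).

Fact channel_is_linear : linear (channel K).
Proof.
move=> a X Y; rewrite /channel scaler_sumr -big_split; apply: eq_bigr => k _ /=.
by rewrite mulmxDr mulmxDl -scalemxAr -scalemxAl.
Qed.

HB.instance Definition _ :=
  GRing.isLinear.Build C 'M[C]_d 'M[C]_d *:%R (channel K) channel_is_linear.

Fact dual_channel_is_linear : linear dual_channel.
Proof.
move=> a X Y; rewrite /dual_channel scaler_sumr -big_split; apply: eq_bigr => k _ /=.
by rewrite mulmxDr mulmxDl -scalemxAr -scalemxAl.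
Qed.

HB.instance Definition _ :=
  GRing.isLinear.Build C 'M[C]_d 'M[C]_d *:%R dual_channel dual_channel_is_linear.

Lemma channel_adj X : channel K (adj X) = adj (channel K X).
Proof. by rewrite /channel adj_sum; apply: eq_bigr => k _; rewrite !adjM adjK mulmxA. Qed.

Lemma dual_channel_adj X : dual_channel (adj X) = adj (dual_channel X).
Proof. by rewrite /dual_channel adj_sum; apply: eq_bigr => k _; rewrite !adjM adjK mulmxA. Qed.

Lemma liouville_vecm X : liouville K *m vecm X = vecm (channel K X).
Proof.
rewrite /liouville /channel mulmx_suml linear_sum /=; apply: eq_bigr => k _.
by rewrite vecm_mul trmx_adj.
Qed.

Lemma adj_liouville_vecm X : adj (liouville K) *m vecm X = vecm (dual_channel X).
Proof.
rewrite /liouville /dual_channel adj_sum mulmx_suml linear_sum /=; apply: eq_bigr => k _.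
by rewrite vecm_mul adj_tens adj_conj.
Qed.

End Channel.

Section QuadraticForm.
Variable R : rcfType.
Local Notation C := R[i].

Lemma norm2E n (v : 'cV[C]_n) : (adj v *m v) 0 0 = \sum_i `|v i 0| ^+ 2.
Proof. by rewrite mxE; apply: eq_bigr => i _; rewrite adjE normCKC. Qed.

Lemma norm2_ge0 n (v : 'cV[C]_n) : 0 <= (adj v *m v) 0 0.
Proof. by rewrite norm2E; apply: sumr_ge0 => i _; exact: exprn_ge0. Qed.

Lemma norm2_eq0 n (v : 'cV[C]_n) : (adj v *m v) 0 0 = 0 -> v = 0.
Proof.
rewrite norm2E => /psumr_eq0P v0; apply/matrixP => i j.
rewrite [j]ord1 mxE; apply/eqP; rewrite -normr_eq0 -sqrf_eq0.
by apply/eqP; apply: v0 => // k _; exact: exprn_ge0.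
Qed.

Lemma norm2_ge_entry n (v : 'cV[C]_n) i : `|v i 0| ^+ 2 <= (adj v *m v) 0 0.
Proof.
by rewrite norm2E (bigD1 i) //= lerDl; apply: sumr_ge0 => k _; exact: exprn_ge0.
Qed.

Lemma norm2_ge_pair n (v : 'cV[C]_n) i j : `|v i 0| * `|v j 0| <= (adj v *m v) 0 0.
Proof.
have [AMGM _] := real_leif_mean_square_scaled (normr_real (v i 0)) (normr_real (v j 0)).
rewrite -(ler_pMn2r (R := C) (isT : (0 < 2)%N)); apply: le_trans AMGM _.
by rewrite mulr2n lerD ?norm2_ge_entry.
Qed.

Lemma hermitian_form_real n (H : 'M[C]_n) (v : 'cV[C]_n) : adj H = H ->
  (adj v *m H *m v) 0 0 \is Num.real.
Proof. by move=> Hh; rewrite CrealE conj_adj_mx00 !adjM adjK Hh mulmxA. Qed.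

Definition entry_norm_sum n (H : 'M[C]_n) : C := \sum_i \sum_j `|H i j|.

Lemma entry_norm_sum_ge0 n (H : 'M[C]_n) : 0 <= entry_norm_sum H.
Proof. by apply: sumr_ge0 => i _; apply: sumr_ge0. Qed.

Lemma norm_form_le n (H : 'M[C]_n) (v : 'cV[C]_n) :
  `|(adj v *m H *m v) 0 0| <= entry_norm_sum H * (adj v *m v) 0 0.
Proof.
rewrite mxE /entry_norm_sum mulr_suml.
under [X in _ <= X]eq_bigr do rewrite mulr_suml.
apply: le_trans (ler_norm_sum _ _ _) _.
rewrite [X in _ <= X]exchange_big /=; apply: ler_sum => j _.
rewrite mxE mulr_suml; apply: le_trans (ler_norm_sum _ _ _) _.
apply: ler_sum => i _.
rewrite !normrM adjE norm_conjC mulrAC mulrC.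
by apply: ler_wpM2l => //; exact: norm2_ge_pair.
Qed.

Lemma mxtrace_sandwich_cols n (M A : 'M[C]_n) :
  \tr (adj M *m A *m M) = \sum_j (adj (col j M) *m A *m col j M) 0 0.
Proof.
rewrite /mxtrace; apply: eq_bigr => j _.
rewrite !mxE; apply: eq_bigr => k _; congr (_ * _); last by rewrite mxE.
by rewrite !mxE; apply: eq_bigr => l _; rewrite !mxE.
Qed.

Lemma mxtrace_adj_mulE n (M : 'M[C]_n) :
  \tr (adj M *m M) = \sum_j (adj (col j M) *m col j M) 0 0.
Proof.
have := mxtrace_sandwich_cols M 1%:M; rewrite mulmx1 => ->.
by apply: eq_bigr => j _; rewrite mulmx1.
Qed.

Lemma mxtrace_adj_mul_ge0 n (M : 'M[C]_n) : 0 <= \tr (adj M *m M).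
Proof. by rewrite mxtrace_adj_mulE; apply: sumr_ge0 => j _; exact: norm2_ge0. Qed.

Lemma mxtrace_adj_mul_eq0 n (M : 'M[C]_n) : \tr (adj M *m M) = 0 -> M = 0.
Proof.
rewrite mxtrace_adj_mulE => /psumr_eq0P col0; apply/matrixP => i j.
have /norm2_eq0/matrixP/(_ i 0) := col0 (fun k _ => norm2_ge0 _) j isT.
by rewrite !mxE.
Qed.

Definition loewner_lb n (A : 'M[C]_n) (c : C) :=
  forall v : 'cV[C]_n, c * (adj v *m v) 0 0 <= (adj v *m A *m v) 0 0.

Lemma mxtrace_loewner_lb n (A : 'M[C]_n) c (M : 'M[C]_n) : loewner_lb A c ->
  c * \tr (adj M *m M) <= \tr (adj M *m A *m M).
Proof.
move=> Alb; rewrite mxtrace_sandwich_cols mxtrace_adj_mulE mulr_sumr.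
by apply: ler_sum => j _; exact: Alb.
Qed.

Lemma mxtrace_sandwich_ge0 n (A : 'M[C]_n) c (M : 'M[C]_n) : 0 < c -> loewner_lb A c ->
  0 <= \tr (adj M *m A *m M).
Proof.
move=> c_gt0 Alb; apply: le_trans (mxtrace_loewner_lb M Alb).
by rewrite mulr_ge0 ?(ltW c_gt0) ?mxtrace_adj_mul_ge0.
Qed.

(* Chosen so that [eps |<<v|H|v>>| <= eps entry_norm_sum H <<v|v>> <= <<v|v>> / 2],
   i.e. [1 + eps H >= 1/2]. *)
Definition perturb_scale n (H : 'M[C]_n) : C := (2 * (entry_norm_sum H + 1))^-1.

Lemma perturb_scale_gt0 n (H : 'M[C]_n) : 0 < perturb_scale H.
Proof. by rewrite invr_gt0 mulr_gt0 // ltr_wpDl ?entry_norm_sum_ge0. Qed.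

Lemma perturb_scale_le n (H : 'M[C]_n) : perturb_scale H * entry_norm_sum H <= 2^-1.
Proof.
have S_ge0 := entry_norm_sum_ge0 H.
have S1_gt0 : 0 < entry_norm_sum H + 1 by rewrite ltr_wpDl.
rewrite /perturb_scale invfM -mulrA ler_piMr ?invr_ge0 ?ler0n //.
by rewrite ler_pdivrMl // mulr1 lerDl.
Qed.

Lemma loewner_lb_perturb n (H : 'M[C]_n) : adj H = H ->
  loewner_lb (1%:M + perturb_scale H *: H) 2^-1.
Proof.
move=> Hh v; set e := perturb_scale H.
have -> : (adj v *m (1%:M + e *: H) *m v) 0 0 = (adj v *m v) 0 0 + e * (adj v *m H *m v) 0 0.
  by rewrite mulmxDr mulmxDl mulmx1 -scalemxAr -scalemxAl [LHS]mxE [X in _ + X]mxE.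
set nv := (adj v *m v) 0 0; set u := (adj v *m H *m v) 0 0.
have e_gt0 : 0 < e := perturb_scale_gt0 H.
have small : `|e * u| <= nv / 2.
  rewrite normrM (gtr0_norm e_gt0) mulrC.
  apply: le_trans (ler_wpM2r (ltW e_gt0) (norm_form_le H v)) _.
  by rewrite mulrAC mulrC ler_wpM2l ?norm2_ge0 // mulrC perturb_scale_le.
have := real_lerNnormlW (realM (gtr0_real e_gt0) (hermitian_form_real v Hh)) small.
rewrite -(lerD2l nv) => lower; apply: le_trans _ lower.
by rewrite {2}[nv](splitr nv) addrK mulrC.
Qed.

End QuadraticForm.

Lemma linear_mx_surj (F : fieldType) m n (f : {linear 'M[F]_(m, n) -> 'M[F]_(m, n)}) :
  (forall X, f X = 0 -> X = 0) -> forall Y, exists X, f X = Y.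
Proof.
move=> f_inj Y; have f_unit : lin_mx f \in unitmx.
  rewrite -row_free_unit -kermx_eq0; apply/eqP/row_matrixP => i; rewrite row0.
  have : row i (kermx (lin_mx f)) *m lin_mx f = 0 by rewrite -row_mul mulmx_ker row0.
  rewrite -[row i _]vec_mxK mul_vec_lin => /(congr1 vec_mx); rewrite mxvecK linear0.
  by move=> /f_inj /(congr1 mxvec); rewrite vec_mxK linear0.
exists (vec_mx (mxvec Y *m invmx (lin_mx f))).
by apply: (can_inj (@mxvecK _ _ _)); rewrite -mul_vec_lin vec_mxK mulmxKV.
Qed.

Section Sylvester.
Variables (R : rcfType) (n : nat) (rho : 'M[R[i]]_n).
Local Notation C := R[i].

Definition sylvester (L : 'M[C]_n) : 'M[C]_n := rho *m L + L *m rho.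

Fact sylvester_is_linear : linear sylvester.
Proof.
move=> a L M; rewrite /sylvester mulmxDr mulmxDl -scalemxAr -scalemxAl.
by rewrite scalerDr addrACA.
Qed.

HB.instance Definition _ :=
  GRing.isLinear.Build C 'M[C]_n 'M[C]_n *:%R sylvester sylvester_is_linear.

Hypothesis rho_herm : adj rho = rho.

Lemma sylvester_adj L : adj (sylvester L) = sylvester (adj L).
Proof. by rewrite /sylvester adjD !adjM rho_herm addrC. Qed.

Variable c : C.
Hypothesis c_gt0 : 0 < c.
Hypothesis rho_lb : loewner_lb rho c.

(* [tr (L^+ (rho L + L rho)) = tr (L^+ rho L) + tr (L rho L^+)], a sum of two
   nonnegative terms. *)
Lemma sylvester_inj L : sylvester L = 0 -> L = 0.
Proof.
move=> L0; have sum0 : \tr (adj L *m rho *m L) + \tr (adj (adj L) *m rho *m adj L) = 0.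
  have := congr1 (fun M => \tr (adj L *m M)) L0; rewrite /= mulmx0 mxtrace0.
  rewrite mulmxDr linearD /= adjK !mulmxA => <-; congr (_ + _).
  by rewrite -[in RHS]mulmxA [in RHS]mxtrace_mulC.
move/eqP: sum0; rewrite paddr_eq0 ?(mxtrace_sandwich_ge0 _ c_gt0 rho_lb) //.
move=> /andP[/eqP tr0 _]; apply: mxtrace_adj_mul_eq0; apply/eqP.
rewrite eq_le mxtrace_adj_mul_ge0 andbT -(pmulr_rle0 _ c_gt0) -tr0.
exact: mxtrace_loewner_lb.
Qed.

Lemma SLD_exists D : adj D = D -> exists L, is_SLD rho D L.
Proof.
move=> D_herm; have [L L_sol] := linear_mx_surj sylvester_inj (2%:R *: D).
exists L; split => //; apply/eqP; rewrite -subr_eq0; apply/eqP/sylvester_inj.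
by rewrite linearB /= -sylvester_adj L_sol adjZ D_herm rmorph_nat subrr.
Qed.

End Sylvester.

Section FisherInformation.
Variables (R : realType) (n : nat) (rho : 'M[R[i]]_n) (c : R[i]).
Local Notation C := R[i].
Hypothesis rho_herm : adj rho = rho.
Hypothesis c_gt0 : 0 < c.
Hypothesis rho_lb : loewner_lb rho c.

Definition rho_form (A B : 'M[C]_n) : C := \tr (adj A *m rho *m B).

Lemma rho_form_conj A B : (rho_form A B)^* = rho_form B A.
Proof. by rewrite /rho_form conj_mxtrace !adjM adjK rho_herm mulmxA. Qed.

Lemma rho_formBl A B D : rho_form (A - B) D = rho_form A D - rho_form B D.
Proof. by rewrite /rho_form adjB !mulmxBl linearB. Qed.

Lemma rho_formBr A B D : rho_form D (A - B) = rho_form D A - rho_form D B.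
Proof. by rewrite /rho_form !mulmxBr linearB. Qed.

Lemma rho_formZl a A D : rho_form (a *: A) D = a^* * rho_form A D.
Proof. by rewrite /rho_form adjZ -!scalemxAl mxtraceZ. Qed.

Lemma rho_formZr a A D : rho_form D (a *: A) = a * rho_form D A.
Proof. by rewrite /rho_form -!scalemxAr mxtraceZ. Qed.

Lemma rho_form_ge0 A : 0 <= rho_form A A.
Proof. exact: mxtrace_sandwich_ge0 c_gt0 rho_lb. Qed.

Lemma rho_form_Cauchy_Schwarz X L : 0 < rho_form X X ->
  rho_form X L * (rho_form X L)^* <= rho_form X X * rho_form L L.
Proof.
move=> a_gt0; set a := rho_form X X; set z := rho_form X L; set b := rho_form L L.
have := rho_form_ge0 (a *: L - z *: X).
rewrite rho_formBl !rho_formBr !rho_formZl !rho_formZr -/a -/z -/b.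
have -> : a^* = a by rewrite rho_form_conj.
have -> : rho_form L X = z^* by rewrite rho_form_conj.
have -> : a * (a * b) - a * (z * z^*) - (z^* * (a * z) - z^* * (z * a)) =
          a * (a * b - z * z^*) by ring.
by rewrite pmulr_rge0 // subr_ge0.
Qed.

Lemma QFI_SLD D : adj D = D ->
  exists L, is_SLD rho D L /\ Complex (QFI rho D) 0 = \tr (rho *m L *m L).
Proof.
move=> D_herm.
pose P q := exists L, is_SLD rho D L /\ Complex q 0 = \tr (rho *m L *m L).
apply: (@xgetPex _ 0 P).
have [L [L_herm L_SLD]] := SLD_exists rho_herm c_gt0 rho_lb D_herm.
exists (complex.Re (\tr (rho *m L *m L))), L; split => //.
have trE : \tr (rho *m L *m L) = rho_form L L by rewrite /rho_form L_herm mxtrace_mulC mulmxA.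
by have := ger0_Im (rho_form_ge0 L); rewrite trE; case: (rho_form L L) => a b /= ->.
Qed.

(* [2 tr (X D) = tr (X (rho L + L rho)) = z + z^*] with [z = tr (X rho L)]. *)
Lemma QFI_ge D X : adj D = D -> adj X = X -> 0 < rho_form X X ->
  `|\tr (X *m D)| ^+ 2 <= rho_form X X * Complex (QFI rho D) 0.
Proof.
move=> D_herm X_herm a_gt0.
have [L [[L_herm L_SLD] ->]] := QFI_SLD D_herm.
have -> : \tr (rho *m L *m L) = rho_form L L by rewrite /rho_form L_herm mxtrace_mulC mulmxA.
set z := rho_form X L.
have twice : \tr (X *m D) *+ 2 = z + z^*.
  rewrite -mulr_natl -mxtraceZ scalemxAr L_SLD mulmxDr linearD /=.
  rewrite /z rho_form_conj /rho_form X_herm L_herm !mulmxA; congr (_ + _).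
  by rewrite [RHS]mxtrace_mulC mulmxA.
have le_z : `|\tr (X *m D)| <= `|z|.
  rewrite -(ler_pMn2r (R := C) (isT : (0 < 2)%N)) -normrMn twice.
  by apply: le_trans (ler_normD _ _) _; rewrite norm_conjC mulr2n.
apply: le_trans _ (@rho_form_Cauchy_Schwarz X L a_gt0).
by rewrite -/z -normCK expr2 ler_pM.
Qed.

End FisherInformation.

Section SteadyState.
Variables (R : rcfType) (d r : nat) (K : 'I_r -> 'M[R[i]]_d) (Uc : 'M[R[i]]_d).
Local Notation C := R[i].

(* The second condition says that [|Y>>] is in the eigenvalue-1 eigenspace of [T^+ T],
   i.e. in the range of [P]. *)
Definition steady (Y : 'M[C]_d) :=
  Uc *m channel K Y *m adj Uc = Y /\ dual_channel K (channel K Y) = Y.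

Lemma steady_adj Y : steady Y -> steady (adj Y).
Proof.
move=> [UEY EEY]; split; last by rewrite channel_adj dual_channel_adj EEY.
by rewrite channel_adj -{2}UEY !adjM adjK mulmxA.
Qed.

Lemma steadyD Y Z : steady Y -> steady Z -> steady (Y + Z).
Proof.
move=> [UEY EEY] [UEZ EEZ]; split; rewrite linearD /=.
  by rewrite mulmxDr mulmxDl UEY UEZ.
by rewrite linearD /= EEY EEZ.
Qed.

Lemma steadyZ a Y : steady Y -> steady (a *: Y).
Proof.
move=> [UEY EEY]; split; rewrite linearZ /=.
  by rewrite -scalemxAr -scalemxAl UEY.
by rewrite linearZ /= EEY.
Qed.

Lemma steady1 : \sum_(k < r) (adj (K k) *m K k) = 1%:M -> channel K 1%:M = 1%:M ->
  Uc *m adj Uc = 1%:M -> steady 1%:M.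
Proof.
move=> trace_pres unital Uc_coiso; split; first by rewrite unital mulmx1.
by rewrite unital -[RHS]trace_pres; apply: eq_bigr => k _; rewrite mulmx1.
Qed.

Hypothesis Uc_unitary : unitary Uc.

Lemma steady_channel Y : steady Y -> adj Uc *m Y *m Uc = channel K Y.
Proof.
move=> [UEY _]; rewrite -{1}UEY; have [Uc_iso _] := Uc_unitary.
by rewrite !mulmxA Uc_iso mul1mx -mulmxA Uc_iso mulmx1.
Qed.

Lemma adj_vecm_steady X : steady X ->
  adj (vecm X) *m (sandwich_liouville Uc *m liouville K) = adj (vecm X).
Proof.
move=> X_steady.
have fixed : adj (sandwich_liouville Uc *m liouville K) *m vecm X = vecm X.
  rewrite adjM -mulmxA adj_sandwich_liouville_vecm steady_channel //.
  by rewrite adj_liouville_vecm (proj2 X_steady).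
by rewrite -[RHS](congr1 (@adj _ _ _) fixed) adjM adjK.
Qed.

End SteadyState.

Section ProbeState.
Variables (R : rcfType) (d : nat) (H : 'M[R[i]]_d).
Local Notation C := R[i].
Hypothesis H_herm : adj H = H.

Definition probe_mx : 'M[C]_d := 1%:M + perturb_scale H *: H.

Definition probe_state : 'M[C]_d := (\tr probe_mx)^-1 *: probe_mx.

Lemma probe_mx_herm : adj probe_mx = probe_mx.
Proof.
rewrite /probe_mx adjD adj1 adjZ H_herm; congr (_ + _ *: _).
by apply/CrealP/gtr0_real/perturb_scale_gt0.
Qed.

Lemma mxtrace_probe_mx_gt0 : (0 < d)%N -> 0 < \tr probe_mx.
Proof.
move=> d_gt0; have := mxtrace_loewner_lb 1%:M (loewner_lb_perturb H_herm).
rewrite adj1 !mulmx1 mul1mx mxtrace1 => /(lt_le_trans _); apply.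
by rewrite mulr_gt0 ?invr_gt0 ?ltr0n.
Qed.

Hypothesis d_gt0 : (0 < d)%N.

Lemma probe_state_herm : adj probe_state = probe_state.
Proof.
rewrite /probe_state adjZ probe_mx_herm; congr (_ *: _).
by apply/CrealP/gtr0_real; rewrite invr_gt0 mxtrace_probe_mx_gt0.
Qed.

Lemma probe_state_lb : loewner_lb probe_state (2 * \tr probe_mx)^-1.
Proof.
move=> v; rewrite /probe_state -scalemxAr -scalemxAl [X in _ <= X]mxE invfM -mulrA mulrCA.
apply: ler_wpM2l; last exact: loewner_lb_perturb.
by rewrite invr_ge0 ltW ?mxtrace_probe_mx_gt0.
Qed.

Lemma probe_state_density : density probe_state.
Proof.
split; last by rewrite /probe_state mxtraceZ mulVf // gt_eqF ?mxtrace_probe_mx_gt0.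
move=> v; apply: le_trans (probe_state_lb v).
by rewrite mulr_ge0 ?norm2_ge0 // invr_ge0 mulr_ge0 // ltW ?mxtrace_probe_mx_gt0.
Qed.

End ProbeState.

Section SequentialState.
Variables (R : realType) (d r : nat) (K : R -> 'I_r -> 'M[R[i]]_d) (Uc rho0 : 'M[R[i]]_d).
Local Notation rho_ N := (seq_state K Uc rho0 N).

Lemma seq_stateS N : rho_ N.+1 = fun s => Uc *m channel (K s) (rho_ N s) *m adj Uc.
Proof. by []. Qed.

Lemma seq_state_fixed t : Uc *m channel (K t) rho0 *m adj Uc = rho0 ->
  forall N, rho_ N t = rho0.
Proof. by move=> fixed; elim=> [|N IHN] //; rewrite seq_stateS IHN. Qed.

Lemma seq_state_adj : adj rho0 = rho0 -> forall N s, adj (rho_ N s) = rho_ N s.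
Proof.
move=> rho0_herm; elim=> [|N IHN] s //.
by rewrite seq_stateS !adjM adjK -channel_adj IHN mulmxA.
Qed.

Variable t : R.
Hypothesis K_derivable : forall k, mx_derivable (fun s => K s k) t.
Local Notation T := (liouville (K t)).
Local Notation dT := (mderive (fun s => liouville (K s)) t).
Local Notation V := (sandwich_liouville Uc).

Lemma is_mxderive_liouville : is_mxderive (fun s => liouville (K s)) t dT.
Proof.
suff [D dD] : exists D, is_mxderive (fun s => liouville (K s)) t D by rewrite (mderive_val dD).
eexists; apply: is_mxderive_sum => k; apply: is_mxderive_tens.
  exact: mx_derivableP.
exact/is_mxderive_conj/mx_derivableP.
Qed.

Lemma is_mxderive_seq_state N : is_mxderive (rho_ N) t (mderive (rho_ N) t).
Proof.
suff [D dD] : exists D, is_mxderive (rho_ N) t D by rewrite (mderive_val dD).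
elim: N => [|N [D dD]]; first by exists 0; apply: is_mxderive_cst.
eexists; rewrite seq_stateS; apply: is_mxderiveM (is_mxderive_cst _ _).
apply: is_mxderiveM (is_mxderive_cst _ _) _; apply: is_mxderive_sum => k.
apply: is_mxderiveM; last exact/is_mxderive_adj/mx_derivableP.
exact: is_mxderiveM (mx_derivableP (K_derivable k)) dD.
Qed.

Lemma mderive_seq_state_adj : adj rho0 = rho0 ->
  forall N, adj (mderive (rho_ N) t) = mderive (rho_ N) t.
Proof.
move=> rho0_herm N; apply: is_mxderive_unique (is_mxderive_seq_state N).
have := is_mxderive_adj (is_mxderive_seq_state N).
by under eq_fun do rewrite seq_state_adj //.
Qed.

Lemma vecm_mderive_seq_stateS N : vecm (mderive (rho_ N.+1) t) =
  V *m (dT *m vecm (rho_ N t) + T *m vecm (mderive (rho_ N) t)).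
Proof.
apply: is_mxderive_unique (is_mxderive_vecm (is_mxderive_seq_state N.+1)) _.
have := is_mxderiveM (is_mxderive_cst t V)
  (is_mxderiveM is_mxderive_liouville (is_mxderive_vecm (is_mxderive_seq_state N))).
rewrite mul0mx add0r.
by under eq_fun do rewrite liouville_vecm sandwich_liouville_vecm.
Qed.

(* Since [rho_N t = rho0] and [<<X| V T = <<X|], each step of the recursion for
   [|rho_N'>>] adds the same term [<<X| V dT |rho0>>]. *)
Lemma adj_vecm_mderive_seq_state X :
  Uc *m channel (K t) rho0 *m adj Uc = rho0 -> adj (vecm X) *m (V *m T) = adj (vecm X) ->
  forall N, adj (vecm X) *m vecm (mderive (rho_ N) t) =
            N%:R *: (adj (vecm X) *m (V *m (dT *m vecm rho0))).
Proof.
move=> rho0_fixed X_fixed; elim=> [|N IHN].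
  by rewrite (mderive_val (is_mxderive_cst _ _)) linear0 mulmx0 scale0r.
rewrite vecm_mderive_seq_stateS seq_state_fixed // !mulmxDr.
rewrite [X in _ + X]mulmxA [X in _ + X]mulmxA -(mulmxA (adj (vecm X)) V) X_fixed.
by rewrite IHN -natr1 scalerDl scale1r addrC.
Qed.

End SequentialState.

Section HeisenbergScaling.
Variables (R : realType) (d r : nat) (K : R -> 'I_r -> 'M[R[i]]_d) (theta0 : R).
Variables (P : 'M[R[i]]_(d * d)) (Uc R0 : 'M[R[i]]_d) (lam : R[i]).
Local Notation C := R[i].
Local Notation K0 := (K theta0).
Local Notation T := (liouville K0).
Local Notation dT := (mderive (fun s => liouville (K s)) theta0).
Local Notation M := (P *m adj T *m dT *m P).
Local Notation V := (sandwich_liouville Uc).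

Hypothesis K_derivable : forall theta k, mx_derivable (fun s => K s k) theta.
Hypothesis trace_preserving : forall theta, \sum_(k < r) (adj (K theta k) *m K theta k) = 1%:M.
Hypothesis unital : forall theta, channel (K theta) 1%:M = 1%:M.
Hypothesis P_herm : adj P = P.
Hypothesis P_idem : P *m P = P.
Hypothesis P_range : forall v : 'cV[C]_(d * d), P *m v = v <-> adj T *m T *m v = v.
Hypothesis Uc_unitary : unitary Uc.
Hypothesis lam_neq0 : lam != 0.
Hypothesis R0_neq0 : vecm R0 != 0.
Hypothesis R0_eigen : M *m vecm R0 = lam *: vecm R0.
Hypothesis R0_fixed : adj Uc *m R0 *m Uc = channel K0 R0.

Lemma adj_liouville_mul_vecm Y : adj T *m T *m vecm Y = vecm (dual_channel K0 (channel K0 Y)).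
Proof. by rewrite -mulmxA liouville_vecm adj_liouville_vecm. Qed.

Lemma steady_P Y : steady K0 Uc Y -> P *m vecm Y = vecm Y.
Proof. by move=> [_ EEY]; apply/P_range; rewrite adj_liouville_mul_vecm EEY. Qed.

Lemma steady_R0 : steady K0 Uc R0.
Proof.
have R0_P : P *m vecm R0 = vecm R0.
  apply: (scalerI lam_neq0).
  by rewrite -R0_eigen scalemxAr -R0_eigen !mulmxA P_idem.
split; last by apply: vecm_inj; rewrite -adj_liouville_mul_vecm; apply/P_range.
have [_ Uc_coiso] := Uc_unitary.
by rewrite -R0_fixed !mulmxA Uc_coiso mul1mx -mulmxA Uc_coiso mulmx1.
Qed.

(* Unitality makes [T |1>> = |1>>] for every [theta], so [dT |1>> = 0]. *)
Lemma dliouville_vecm1 : dT *m vecm 1%:M = 0.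
Proof.
have := is_mxderiveM (is_mxderive_liouville (K_derivable theta0))
  (is_mxderive_cst theta0 (vecm (1%:M : 'M[C]_d))).
rewrite mulmx0 addr0; under eq_fun do rewrite liouville_vecm unital.
by move=> dT1; exact: is_mxderive_unique dT1 (is_mxderive_cst _ _).
Qed.

Lemma steady_drift X Y : steady K0 Uc X -> steady K0 Uc Y ->
  adj (vecm X) *m (V *m (dT *m vecm Y)) = adj (vecm X) *m M *m vecm Y.
Proof.
move=> X_steady Y_steady.
have XV : adj (vecm X) *m V = adj (vecm X) *m adj T.
  rewrite -[LHS]adjK [adj (_ *m V)]adjM adjK adj_sandwich_liouville_vecm.
  by rewrite (steady_channel Uc_unitary X_steady) -liouville_vecm adjM.
have XP : adj (vecm X) *m P = adj (vecm X).
  by rewrite -[LHS]adjK [adj (_ *m P)]adjM adjK P_herm steady_P.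
by rewrite !mulmxA XV XP -[in RHS]mulmxA steady_P.
Qed.

(* The form [<<X|M|Y>>] cannot vanish on all Hermitian steady pairs: [R0] is a complex
   combination of the two Hermitian steady matrices below and [<<R0|M|R0>> = lam |R0|^2]. *)
Lemma steady_hermitian_witness : exists X H,
  [/\ steady K0 Uc X, steady K0 Uc H, adj X = X, adj H = H &
      adj (vecm X) *m M *m vecm H != 0].
Proof.
set H1 := R0 + adj R0; set H2 := 'i *: (R0 - adj R0).
have H1_steady : steady K0 Uc H1 by apply/steadyD/steady_adj; exact: steady_R0.
have H2_steady : steady K0 Uc H2.
  apply/steadyZ/steadyD; first exact: steady_R0.
  by rewrite -scaleN1r; apply/steadyZ/steady_adj/steady_R0.
have H1_herm : adj H1 = H1 by rewrite adjD adjK addrC.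
have H2_herm : adj H2 = H2 by rewrite adjZ adjB adjK conjCi scaleNr -scalerN opprB.
have [q11|] := eqVneq (adj (vecm H1) *m M *m vecm H1) 0; last by exists H1, H1.
have [q12|] := eqVneq (adj (vecm H1) *m M *m vecm H2) 0; last by exists H1, H2.
have [q21|] := eqVneq (adj (vecm H2) *m M *m vecm H1) 0; last by exists H2, H1.
have [q22|] := eqVneq (adj (vecm H2) *m M *m vecm H2) 0; last by exists H2, H2.
exfalso; have R0E : vecm R0 = 2^-1 *: (vecm H1 - 'i *: vecm H2).
  have <- : 2^-1 *: (H1 - 'i *: H2) = R0.
    rewrite /H1 /H2 (scalerA (R := C)) -expr2 sqrCi scaleN1r opprK addrACA subrr addr0 -mulr2n.
    by rewrite -scalerMnr scalerMnl -mulr_natr mulVf ?scale1r ?pnatr_eq0.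
  by rewrite vecmZ vecmB vecmZ.
have : adj (vecm R0) *m M *m vecm R0 = 0.
  rewrite R0E adjZ adjB adjZ !(mulmxBl, mulmxBr, =^~ scalemxAl, =^~ scalemxAr).
  by rewrite q11 q12 q21 q22 !(scaler0, subr0).
rewrite -mulmxA R0_eigen -scalemxAr => /eqP; rewrite scaler_eq0 (negbTE lam_neq0) /=.
move=> /eqP norm0; have R00 : vecm R0 = 0 by apply: norm2_eq0; rewrite norm0 mxE.
by move: R0_neq0; rewrite R00 eqxx.
Qed.

Lemma dim_gt0 : (0 < d)%N.
Proof.
by case: d R0 R0_neq0 => // R0' /negP[]; apply/eqP/matrixP => -[].
Qed.

Lemma steady_probe_state H : adj H = H -> steady K0 Uc H -> steady K0 Uc (probe_state H).
Proof.
move=> H_herm H_steady; apply/steadyZ/steadyD/steadyZ => //.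
by apply: steady1; [exact: trace_preserving | exact: unital | case: Uc_unitary].
Qed.

Lemma probe_state_drift X H : steady K0 Uc X -> steady K0 Uc H ->
  adj (vecm X) *m (V *m (dT *m vecm (probe_state H))) =
  ((\tr (probe_mx H))^-1 * perturb_scale H) *: (adj (vecm X) *m M *m vecm H).
Proof.
move=> X_steady H_steady; rewrite /probe_state /probe_mx vecmZ vecmD vecmZ.
rewrite -!scalemxAr mulmxDr dliouville_vecm1 add0r -!scalemxAr.
by rewrite steady_drift // scalerA.
Qed.

Lemma QFI_seq_state_ge X rho0 c N : steady K0 Uc X -> adj X = X ->
  steady K0 Uc rho0 -> adj rho0 = rho0 -> 0 < c -> loewner_lb rho0 c ->
  0 < rho_form rho0 X X ->
  N%:R ^+ 2 * `|(adj (vecm X) *m (V *m (dT *m vecm rho0))) 0 0| ^+ 2 <=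
  rho_form rho0 X X *
  Complex (QFI (seq_state K Uc rho0 N theta0) (mderive (seq_state K Uc rho0 N) theta0)) 0.
Proof.
move=> X_steady X_herm [rho0_fixed _] rho0_herm c_gt0 rho0_lb a_gt0.
have D_herm := @mderive_seq_state_adj _ _ _ K Uc rho0 theta0 (K_derivable _) rho0_herm N.
have := QFI_ge rho0_herm c_gt0 rho0_lb D_herm X_herm a_gt0.
rewrite seq_state_fixed // -{1}X_herm -adj_vecm_mul.
rewrite adj_vecm_mderive_seq_state ?adj_vecm_steady //.
by rewrite mxentryZ normrM normr_nat exprMn.
Qed.

Lemma heisenberg_scaling : exists rho0 : 'M[C]_d, density rho0 /\
  exists c : R, 0 < c /\ forall N : nat,
    Complex (c * N%:R ^+ 2) 0 <=
    Complex (QFI (seq_state K Uc rho0 N theta0) (mderive (seq_state K Uc rho0 N) theta0)) 0.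
Proof.
have [X [H [X_steady H_steady X_herm H_herm XMH_neq0]]] := steady_hermitian_witness.
pose rho0 := probe_state H; pose w := (adj (vecm X) *m (V *m (dT *m vecm rho0))) 0 0.
have t_gt0 : 0 < \tr (probe_mx H) := mxtrace_probe_mx_gt0 H_herm dim_gt0.
have rho0_herm : adj rho0 = rho0 := probe_state_herm H_herm dim_gt0.
have c0_gt0 : 0 < (2 * \tr (probe_mx H))^-1 by rewrite invr_gt0 mulr_gt0.
have rho0_lb := probe_state_lb H_herm dim_gt0.
have rho0_steady := steady_probe_state H_herm H_steady.
have w_neq0 : w != 0.
  rewrite /w -mx11_eq0 probe_state_drift // scaler_eq0 negb_or XMH_neq0 andbT.
  by apply: mulf_neq0; apply: lt0r_neq0; rewrite ?perturb_scale_gt0 ?invr_gt0.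
have a_gt0 : 0 < rho_form rho0 X X.
  apply: lt_le_trans (mxtrace_loewner_lb X rho0_lb); rewrite mulr_gt0 // lt_def.
  rewrite mxtrace_adj_mul_ge0 andbT; apply: contraNneq w_neq0 => /mxtrace_adj_mul_eq0 X0.
  by rewrite /w X0 linear0 adj0 mul0mx mxE.
pose kap := `|w| ^+ 2 / rho_form rho0 X X.
have kap_gt0 : 0 < kap by rewrite divr_gt0 // exprn_gt0 // normr_gt0.
exists rho0; split; first exact: probe_state_density H_herm dim_gt0.
exists (complex.Re kap); split; first by move: kap_gt0; rewrite ltcE => /andP[].
move=> N; have kapE : kap = Complex (complex.Re kap) 0.
  by apply/eqP; rewrite eq_complex /= (ger0_Im (ltW kap_gt0)) !eqxx.
have -> : Complex (complex.Re kap * N%:R ^+ 2) 0 = N%:R ^+ 2 * kap.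
  by rewrite kapE mulrC -[LHS]/(real_complex R _) rmorphM rmorphXn rmorph_nat.
have := QFI_seq_state_ge N X_steady X_herm rho0_steady rho0_herm c0_gt0 rho0_lb a_gt0.
by rewrite -/w /kap mulrA ler_pdivrMr // [_ * rho_form _ _ _]mulrC.
Qed.

End HeisenbergScaling.

Theorem theorem2 (R : realType) (d r : nat) (K : R -> 'I_r -> 'M[R[i]]_d)
  (theta0 : R)
  (Kdiff : forall (theta : R) (k : 'I_r), mx_derivable (fun s => K s k) theta)
  (Htp : forall theta : R, \sum_(k < r) (adj (K theta k) *m K theta k) = 1%:M)
  (Hunital : forall theta : R, channel (K theta) 1%:M = 1%:M)
  (P : 'M[R[i]]_(d * d))
  (HPherm : adj P = P) (HPidem : P *m P = P)
  (HPrange : forall v : 'cV[R[i]]_(d * d),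
     P *m v = v <->
     (adj (liouville (K theta0)) *m liouville (K theta0)) *m v = v)
  (Hnz : P *m adj (liouville (K theta0))
           *m mderive (fun s => liouville (K s)) theta0 *m P != 0)
  (Hnormal :
     let M := P *m adj (liouville (K theta0))
                *m mderive (fun s => liouville (K s)) theta0 *m P in
     M *m adj M = adj M *m M)
  (Uc R0 : 'M[R[i]]_d) (lam : R[i])
  (HUc : unitary Uc)
  (Hlam : lam != 0) (HR0 : vecm R0 != 0)
  (Heig : P *m adj (liouville (K theta0))
            *m mderive (fun s => liouville (K s)) theta0 *m P *m vecm R0
          = lam *: vecm R0)
  (Hfix : adj Uc *m R0 *m Uc = channel (K theta0) R0) :
  exists rho0 : 'M[R[i]]_d, density rho0 /\
    exists c : R, 0 < c /\ exists N0 : nat, forall N : nat, (N0 <= N)%N ->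
      c * (N%:R ^+ 2) <=
      QFI (seq_state K Uc rho0 N theta0)
          (mderive (seq_state K Uc rho0 N) theta0).
Proof.
have [rho0 [rho0_density [c [c_gt0 bound]]]] :=
  heisenberg_scaling Kdiff Htp Hunital HPherm HPidem HPrange HUc Hlam HR0 Heig Hfix.
exists rho0; split => //; exists c; split => //; exists 0%N => N _.
by move: (bound N); rewrite lecE => /andP[].
Qed.
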